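(* Let $p,q$ be positive integers with $p+q$ odd. For all $n\ge3$ and all $g\in\mathcal{J}^{p,q}_n$, $\psi_n(g)\equiv\psi_{n-1}(g_L)+\psi_{n-1}(g_R)\pmod 2$.
   Context: Let $p,q$ be positive integers with $p+q$ odd. $\mathbb{Z}_{2^k}$ denotes the integers modulo $2^k$ ($\mathbb{Z}_1$ trivial); as $p+q$ is odd, division by $p+q$ and $(p+q)^2$ is well defined in $\mathbb{Z}_{2^k}$. For $m\ge1$, $D_{2m}$ is the dihedral group of order $2m$, realized as pairs $(f,x)$, $f\in\mathbb{Z}_2$, $x\in\mathbb{Z}_m$, with product $(f_1,x_1)(f_2,x_2)=(f_1+f_2,x_1+(-1)^{f_1}x_2)$. Define $\Phi:D_{2m}\to D_{2m}$, $\Phi((f,x))=(f,\delta(f=1)(p+q)(p-q)-x)$, where $\delta(f=1)$ is $1$ if $f=1$ and $0$ otherwise. $\mathrm{Aut}(T_1)$ is trivial; for $k\ge1$, $\mathrm{Aut}(T_{k+1})$ is the set of triples $g=(g_f,g_L,g_R)$, $g_f\in\mathbb{Z}_2$, $g_L,g_R\in\mathrm{Aut}(T_k)$, with product $(f,A,B)(g,C,D)=(f+g,AC,BD)$ if $f=0$ and $(f+g,AD,BC)$ if $f=1$; subscripts chain ($g_{LR}=(g_L)_R$, $g_{Lf}=(g_L)_f$). Recursively: $\mathcal{J}_1=\mathrm{Aut}(T_2)$, $\psi_1=0$, $\Delta_1(g)=(g_f,0)$; $\mathcal{J}_2=\{g\in\mathrm{Aut}(T_3):g_L=g_R\}$,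 $\psi_2(g)=\delta(g_{Lf}=1)\in\mathbb{Z}_2$, $\Delta_2(g)=(g_f,\psi_2(g))$; for $n\ge3$, $\mathcal{J}_n=\{g\in\mathrm{Aut}(T_{n+1}):g_L,g_R\in\mathcal{J}_{n-1},\ \Delta_{n-1}(g_L)=\Phi(\Delta_{n-1}(g_R))\}$, with $\psi_n:\mathcal{J}_n\to\mathbb{Z}_{2^{\lfloor n/2\rfloor}}$ given by $\psi_n(g)=(\psi_{n-1}(g_L)+\psi_{n-1}(g_R))/(p+q)$ for odd $n$ and $\psi_n(g)=\big(2(\psi_{n-2}(g_{LL})+\psi_{n-2}(g_{RL}))-\delta(g_{Lf}=1)(p+q)(p-q)\big)/(p+q)^2$ for even $n$ (with $2\psi_{n-2}(\cdot)$ read in $\mathbb{Z}_{2^{n/2}}$), and $\Delta_n:\mathcal{J}_n\to D_{2^{\lfloor n/2\rfloor+1}}$ given by $\Delta_n(g)=(g_f,\psi_{n-1}(g_L)-\psi_{n-1}(g_R))$ for odd $n$ and $\Delta_n(g)=(g_f,(p+q)\psi_n(g)-2\psi_{n-1}(g_R))$ for even $n$. In the claim all values are reduced modulo $2$. *)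

From mathcomp Require Import all_boot all_order all_algebra.
Unset Printing Implicit Defensive.
Import Order.TTheory GRing.Theory Num.Theory.
Local Open Scope ring_scope.

(* autT k = Aut(T_{k+1}):  Aut(T_1) trivial, Aut(T_{k+1}) = Z_2 x Aut(T_k) x Aut(T_k). *)
Fixpoint autT (k : nat) : Type :=
  match k with
  | O => unit
  | S k' => (bool * autT k' * autT k')%type
  end.

Definition gf {k : nat} (g : autT k.+1) : bool := (g : bool * autT k * autT k).1.1.
Definition gL {k : nat} (g : autT k.+1) : autT k := (g : bool * autT k * autT k).1.2.
Definition gR {k : nat} (g : autT k.+1) : autT k := (g : bool * autT k * autT k).2.

(* Elements of Z_{2^j} are represented by integers reduced to [0, 2^j). *)
(* Modulus of the codomain of psi_n (and of the Z-part of Delta_n): 2^{floor(n/2)}. *)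
Definition pow2mod (n : nat) : int := (2 ^ (n./2))%N%:Z.

(* inverse of u modulo m (u coprime to m), via the Bezout coefficient *)
Definition invmod (u m : int) : int := (egcdz u m).1.
Definition divmod (a u m : int) : int := ((a * invmod u m) %% m)%Z.

Definition delta (b : bool) : int := (b : nat)%:Z.

(* psi_n : J_n -> Z_{2^{floor(n/2)}}  (defined on all of Aut(T_{n+1})) *)
Fixpoint psi (p q : nat) (n : nat) {struct n} : autT n -> int :=
  match n return autT n -> int with
  | O => fun _ => 0
  | S n1 => fun g =>
    (match n1 as k return autT k.+1 -> (autT k -> int) -> int with
     | O => fun _ _ => 0                              (* n = 1 *)
     | S m => fun g psi_prev =>
       if m == 0%N then delta (gf (gL g))             (* n = 2 *)
       else if odd m then                             (* n = m+2 >= 3 odd *)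
         divmod (psi_prev (gL g) + psi_prev (gR g)) (p + q)%N%:Z (pow2mod m.+2)
       else                                           (* n = m+2 >= 4 even *)
         divmod (2 * (psi p q m (gL (gL g)) + psi p q m (gL (gR g)))
                 - delta (gf (gL g)) * (p + q)%N%:Z * (p%:Z - q%:Z))
                (((p + q)%N%:Z) ^+ 2) (pow2mod m.+2)
     end) g (psi p q n1)
  end.

(* Dihedral group D_{2m} elements (f, x), f in Z_2 (bool), x in Z_m. *)
Definition Phi (p q : nat) (m : int) (fx : bool * int) : bool * int :=
  (fx.1, ((delta fx.1 * (p + q)%N%:Z * (p%:Z - q%:Z) - fx.2) %% m)%Z).

(* Delta_n : J_n -> D_{2^{floor(n/2)+1}}, i.e. x in Z_{2^{floor(n/2)}} *)
Definition Delta (p q : nat) (n : nat) : autT n -> bool * int :=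
  match n return autT n -> bool * int with
  | O => fun _ => (false, 0)
  | 1%N => fun g => (gf g, 0)
  | 2%N => fun g => (gf g, psi p q 2 g)
  | S ((S m) as n1) => fun g =>
      if odd n1.+1 then
        (gf g, ((psi p q n1 (gL g) - psi p q n1 (gR g)) %% pow2mod n1.+1)%Z)
      else
        (gf g, (((p + q)%N%:Z * psi p q n1.+1 g - 2 * psi p q n1 (gR g))
                  %% pow2mod n1.+1)%Z)
  end.

(* J_n as a predicate on Aut(T_{n+1}) *)
Fixpoint J (p q : nat) (n : nat) {struct n} : autT n -> Prop :=
  match n return autT n -> Prop with
  | O => fun _ => True
  | S n1 => fun g =>
    (match n1 as k return autT k.+1 -> (autT k -> Prop) -> Prop with
     | O => fun _ _ => True                           (* n = 1 : J_1 = Aut(T_2) *)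
     | S m => fun g J_prev =>
       if m == 0%N then gL g = gR g                   (* n = 2 *)
       else                                           (* n = m+2 >= 3 *)
         J_prev (gL g) /\ J_prev (gR g) /\
         Delta p q m.+1 (gL g) = Phi p q (pow2mod m.+1) (Delta p q m.+1 (gR g))
     end) g (J p q n1)
  end.

From mathcomp Require Import all_boot all_order all_algebra.
Import GRing.Theory Num.Theory.
Local Open Scope ring_scope.

(* Reduce everything to F_2.  Every modulus 2^j occurring here has j >= 1 and
   the divisions are by the odd numbers p + q and (p + q)^2, so neither the
   reductions nor the divisions change parities.  For odd n the identity is
   then immediate.  For even n, psi_n(g) = (2(...) - d(p+q)(p-q))/(p+q)^2 is
   congruent to d = delta(g_Lf), and the second component of the defining
   relation Delta(g_L) = Phi(Delta(g_R)) of J_n, read mod 2, says that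
   psi_{n-1}(g_L) + psi_{n-1}(g_R) is congruent to the same d. *)

Local Notation par x := ((x : int)%:~R : 'F_2).

Fact pchar_F2 : 2%N \in [pchar 'F_2].
Proof. exact: pchar_Fp. Qed.

Lemma F2_eq1_of_neq0 (x : 'F_2) : x != 0 -> x = 1.
Proof. by case: x => -[|[|]] //= ? _; apply/val_inj. Qed.

Lemma eqz_mod2 (x y : int) : (x == y %[mod 2])%Z = (par x == par y).
Proof. by rewrite eqz_mod_dvd (dvdz_pcharf pchar_F2) intrB subr_eq0. Qed.

Lemma intrF2_nat (n : nat) : par n = (odd n)%:R.
Proof. by rewrite -pmulrn -(Fp_nat_mod (isT : prime 2) n) modn2. Qed.

Lemma intrF2_modz (x m : int) : (2 %| m)%Z -> par (x %% m)%Z = par x.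
Proof.
rewrite (dvdz_pcharf pchar_F2) => /eqP m0.
by rewrite /modz intrB intrM m0 mulr0 subr0.
Qed.

Lemma intrF2_divmod (a u m : int) :
  coprimez u m -> (2 %| m)%Z -> par (divmod a u m) = par a.
Proof.
move=> co_um even_m; rewrite /divmod intrF2_modz // intrM.
suff -> : par (invmod u m) = 1 by rewrite mulr1.
(* The Bezout relation i u + v m = 1, read in F_2 where m vanishes, makes i odd. *)
rewrite /invmod; case: egcdzP => i v + _ /=; rewrite (eqP co_um) => Bezout.
apply: F2_eq1_of_neq0; apply: contra_eq_neq (congr1 (fun z => par z) Bezout) => i0.
move: even_m; rewrite (dvdz_pcharf pchar_F2) => /eqP m0.
by rewrite intrD !intrM i0 m0 !mul0r mulr0 add0r rmorph1 eq_sym oner_neq0.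
Qed.

Lemma dvd2_pow2mod k : (1 < k)%N -> (2 %| pow2mod k)%Z.
Proof. by case: k => [|[|k]] // _; apply: dvdn_exp. Qed.

Lemma coprimez_pow2mod (u : nat) k : odd u -> coprimez u%:Z (pow2mod k).
Proof.
by move=> odd_u; rewrite coprimezE /pow2mod !absz_nat coprimeXr // coprimen2.
Qed.

Section Unfolding.

Variables p q : nat.

Lemma psi_oddE m (g : autT m.+3) : odd m.+3 ->
  psi p q m.+3 g =
  divmod (psi p q m.+2 (gL g) + psi p q m.+2 (gR g)) (p + q)%N%:Z (pow2mod m.+3).
Proof. by rewrite /= negbK => ->. Qed.

Lemma psi_evenE m (g : autT m.+4) : ~~ odd m.+4 ->
  psi p q m.+4 g =
  divmod (2 * (psi p q m.+2 (gL (gL g)) + psi p q m.+2 (gL (gR g)))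
            - delta (gf (gL g)) * (p + q)%N%:Z * (p%:Z - q%:Z))
         ((p + q)%N%:Z ^+ 2) (pow2mod m.+4).
Proof. by rewrite /= !negbK => /negbTE ->. Qed.

Lemma Delta_oddE m (h : autT m.+3) : odd m.+3 ->
  Delta p q m.+3 h =
  (gf h, ((psi p q m.+2 (gL h) - psi p q m.+2 (gR h)) %% pow2mod m.+3)%Z).
Proof. by move=> /= ->. Qed.

Lemma J_DeltaE m (g : autT m.+4) : J p q m.+4 g ->
  Delta p q m.+3 (gL g) = Phi p q (pow2mod m.+3) (Delta p q m.+3 (gR g)).
Proof. by case=> _ []. Qed.

End Unfolding.

Section Parity.

Variables p q : nat.
Hypothesis odd_pq : odd (p + q).

Lemma psi_odd_mod2 m (g : autT m.+3) : odd m.+3 ->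
  par (psi p q m.+3 g) = par (psi p q m.+2 (gL g)) + par (psi p q m.+2 (gR g)).
Proof.
move=> odd_n; rewrite psi_oddE //.
by rewrite intrF2_divmod ?coprimez_pow2mod ?dvd2_pow2mod // intrD.
Qed.

Lemma intrF2_sub_pq : par (p%:Z - q%:Z) = 1.
Proof.
by rewrite intrB -[par q](oppr_pchar2 pchar_F2) opprK -intrD -PoszD intrF2_nat odd_pq.
Qed.

Lemma psi_even_mod2 m (g : autT m.+4) : ~~ odd m.+4 ->
  par (psi p q m.+4 g) = par (delta (gf (gL g))).
Proof.
move=> even_n; rewrite psi_evenE //.
rewrite intrF2_divmod ?coprimezXl ?coprimez_pow2mod ?dvd2_pow2mod //.
rewrite intrB !intrM intrF2_sub_pq intrF2_nat odd_pq (intrF2_nat 2).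
by rewrite mul0r sub0r !mulr1 (oppr_pchar2 pchar_F2).
Qed.

Lemma J_psi_sum_mod2 m (g : autT m.+4) : ~~ odd m.+4 -> J p q m.+4 g ->
  par (psi p q m.+3 (gL g)) + par (psi p q m.+3 (gR g)) = par (delta (gf (gL g))).
Proof.
move=> even_n /J_DeltaE; have odd_n1 : odd m.+3 by rewrite -[odd _]negbK.
(* Generalising psi_{n-2} stops the pair injection below from unfolding it. *)
rewrite !Delta_oddE // !psi_odd_mod2 // /Phi; move: (psi p q m.+2) => psi2.
move=> -[f_LR /(congr1 (fun z => par z))].
have even_M : (2 %| pow2mod m.+3)%Z by apply: dvd2_pow2mod.
rewrite !intrF2_modz // [par (_ - (_ %% _)%Z)]intrB intrF2_modz //.
rewrite !intrB !intrM intrF2_sub_pq intrF2_nat odd_pq !mulr1 -f_LR => LR.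
rewrite -[X in _ + X + _](oppr_pchar2 pchar_F2).
by rewrite -[X in _ + (_ + X) = _](oppr_pchar2 pchar_F2) LR subrK.
Qed.

End Parity.

Theorem lemma7 (p q : nat) (hp : (0 < p)%N) (hq : (0 < q)%N) (hpq : odd (p + q)) :
  forall n : nat, (3 <= n.+1)%N -> forall g : autT n.+1, J p q n.+1 g ->
    (psi p q n.+1 g = psi p q n (gL g) + psi p q n (gR g) %[mod 2])%Z.
Proof.
case=> [|[|n]] // _ g Jg; apply/eqP; rewrite eqz_mod2 intrD.
have [odd_n | even_n] := boolP (odd n.+3); first by rewrite psi_odd_mod2.
case: n even_n g Jg => [|m] // even_n g Jg.
by rewrite psi_even_mod2 // J_psi_sum_mod2.
Qed.
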